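(* Let $X$ be a vertex-weighted simplicial complex on $n$ vertices, fix $k$, and let $U^{up}$ be a $\Pi^\pm_k$-projected $(1,\alpha,0)$-unitary encoding of $\Pi^\pm_kP^{up}\Pi^\pm_k$, i.e. $(\Pi^\pm_k\otimes\langle0^\alpha|)U^{up}(\Pi^\pm_k\otimes|0^\alpha\rangle)=\Pi^\pm_kP^{up}\Pi^\pm_k$. Let $V^{up}=((I_n\otimes HZ\otimes I)\otimes I_\alpha)U^{up}$, where $HZ$ (the product of the Hadamard and Pauli-$Z$ matrices) acts on qubit $n+1$. Then $(\Pi_k\otimes\langle0^\alpha|)V^{up}(\Pi_k\otimes|0^\alpha\rangle)=\frac{\Delta^{up}_k}{K^{up}\sqrt2}$.
   Context: Vertices $V=\{1,\dots,n\}$ with weights $w:V\to(0,\infty)$. $X$ is a family of nonempty subsets of $V$ closed under nonempty subsets; $X_k$ = $k$-simplices (size $k+1$), identified with Hamming-weight-$(k+1)$ strings $x_\sigma\in\{0,1\}^n$. Oriented $k$-simplex: ordering $[v_0,\dots,v_k]$ up to even permutations, positive if an even permutation of the increasing order. $X^\pm_k=X^+_k\cup X^-_k$, $\overline\sigma$ opposite orientation, $\sigma_+$ the positive one of $\sigma,\overline\sigma$. $[v_0,\dots,v_k]$ induces on a coface $\sigma\cup\{u\}$ the orientation $[u,v_0,\dots,v_k]$. For oriented $\sigma,\sigma'$ with distinct underlying simplices, $\sigma\sim_\uparrow\sigma'$ if their union is a $(k+1)$-simplex of $X$ on which they induce the same orientation; $v_\sigma$ ($v_{\sigma'}$) is the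 vertex of $\sigma$ not in $\sigma'$ (vice versa); $\mathrm{up}(\sigma)=\{u:\sigma\cup\{u\}\in X_{k+1}\}$. $\Delta^{up}_k$ is the matrix indexed by $X^+_k$ with $(\Delta^{up}_k)_{\sigma\sigma}=\sum_{u\in\mathrm{up}(\sigma)}w(u)^2$, $(\Delta^{up}_k)_{\sigma\sigma'}=w(v_\sigma)w(v_{\sigma'})$ if $\sigma\sim_\uparrow\sigma'$, $-w(v_\sigma)w(v_{\sigma'})$ if $\sigma\sim_\uparrow\overline{\sigma'}$, $0$ otherwise. $\Theta$ is an absorbing state, $S_k=X^\pm_k\cup\{\Theta\}$; $|\sigma\rangle$ is the $(n+2)$-qubit basis state $|x_\sigma\rangle|00\rangle$ ($\sigma\in X^+_k$), $|x_\sigma\rangle|10\rangle$ ($\sigma\in X^-_k$), $|0^n\rangle|01\rangle$ ($\Theta$). $\Pi_k$, $\Pi^\pm_k$ project onto $\mathrm{span}\{|\sigma\rangle\}$ over $X^+_k$, $X^\pm_k$; matrices indexed by $X^+_k$ or $S_k$ act on these spans in this basis and as $0$ elsewhere. A unitary $U$ is a $\Pi_s$-projected $(a,\alpha,\epsilon)$-unitary encoding of $A$ if $\|A-a(\Pi_s\otimes\langle0^\alpha|)U(\Pi_s\otimes|0^\alpha\rangle)\|\le\epsilon$. For $\sigma\in X^\pm_k$: $i(\sigma)$ = position of the $i$-th $0$ of $x_\sigma$, $\tilde j(\tau)$ = position of the $j$-th $1$ of $x_\tau$; $\sigma^\uparrow(i)=\sigma\cup\{i(\sigma)\}$. $K^{up}=\max_{\sigma\in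 X^\pm_k}\sum_{i\in[n-k-1],j\in[k+2]}w(i(\sigma))w(\tilde j(\sigma^\uparrow(i)))$; $\eta^{up}_\sigma=1-\frac1{K^{up}}\sum_{\sigma'\in X^+_k}|(\Delta^{up}_k)_{\sigma'\sigma_+}|$. $P^{up}$ on $S_k$: for $\sigma,\sigma'\in X^\pm_k$, $P^{up}_{\sigma\sigma}=\sum_{u\in\mathrm{up}(\sigma)}w(u)^2/K^{up}$, $P^{up}_{\sigma\sigma'}=w(v_\sigma)w(v_{\sigma'})/K^{up}$ if $\sigma\sim_\uparrow\sigma'$, $P^{up}_{\sigma\Theta}=\eta^{up}_\sigma$, $P^{up}_{\Theta\Theta}=1$, all other entries $0$. *)

From HB Require Import structures.
From mathcomp Require Import all_boot all_order all_algebra.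
Set Implicit Arguments. Unset Strict Implicit. Unset Printing Implicit Defensive.
Import Order.TTheory GRing.Theory Num.Theory.
Local Open Scope ring_scope.

(* Finite-dimensional operators, written in a computational basis T:  *)
(* A i j = <i| A |j>.                                                  *)
Definition op (C : Type) (T : finType) := T -> T -> C.

Section Ops.
Variable C : numClosedFieldType.

Definition mulo (T : finType) (A B : op C T) : op C T :=
  fun i j => \sum_(l : T) A i l * B l j.
Definition ido (T : finType) : op C T := fun i j => (i == j)%:R.
Definition adjo (T : finType) (A : op C T) : op C T := fun i j => (A j i)^*.
Definition unitaryo (T : finType) (U : op C T) : Prop :=
  mulo U (adjo U) = @ido T /\ mulo (adjo U) U = @ido T.
Definition tenso (T1 T2 : finType) (A : op C T1) (B : op C T2) : op C (T1 * T2)%type :=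
  fun i j => A i.1 j.1 * B i.2 j.2.
Definition scaleo (T : finType) (c : C) (A : op C T) : op C T := fun i j => c * A i j.

(* single-qubit gates on basis bool (false = |0>, true = |1>) *)
Definition Hgate : op C bool := fun i j => (if i && j then -1 else 1) / sqrtC 2.
Definition Zgate : op C bool := fun i j => if i == j then (if i then -1 else 1) else 0.
Definition HZgate : op C bool := mulo Hgate Zgate.
End Ops.

(* m-qubit computational basis states *)
Definition bits (m : nat) := {ffun 'I_m -> bool}.
Definition zeros (m : nat) : bits m := [ffun=> false].
(* the (n+2)-qubit register: (qubits 1..n, qubit n+1), qubit n+2 *)
Definition sysT (n : nat) := (bits n * bool * bool)%type.
Definition fullT (n al : nat) := (sysT n * bits al)%type.

Section Proj.
Variable C : numClosedFieldType.
Definition proj0 (n al : nat) (U : op C (fullT n al)) : op C (sysT n) :=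
  fun s t => U (s, zeros al) (t, zeros al).
Definition block (n al : nat) (Pi : op C (sysT n)) (U : op C (fullT n al)) : op C (sysT n) :=
  mulo Pi (mulo (proj0 U) Pi).
End Proj.

(* Simplicial complexes on vertex set 'I_n (= {1,...,n} shifted).      *)
Definition set_of (n : nat) (x : bits n) : {set 'I_n} := [set i | x i].

Definition simplicial_complex (n : nat) (X : {set {set 'I_n}}) : Prop :=
  (forall s : {set 'I_n}, s \in X -> s != set0) /\
  (forall s t : {set 'I_n}, s \in X -> t \subset s -> t != set0 -> t \in X).

Definition skel (n : nat) (X : {set {set 'I_n}}) (k : nat) : {set {set 'I_n}} :=
  [set s in X | #|s| == k.+1].

Definition inv_par (s : seq nat) : bool :=
  odd (\sum_(i < size s) \sum_(j < size s | (i < j)%N)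
         ((nth 0%N s j < nth 0%N s i)%N : nat))%N.

(* An oriented simplex is a pair (sigma, b): b = false means positive
   orientation (class of the increasing ordering), b = true negative.
   Orientation induced on the coface sigma ∪ {u} by the ordering
   [u, v_0, ..., v_k], where [v_0,...,v_k] has orientation b. *)
Definition ori_coface (n : nat) (s : {set 'I_n}) (b : bool) (u : 'I_n) : bool :=
  b (+) inv_par (map val (u :: enum s)).

Section Complex.
Variables (C : numClosedFieldType) (n : nat) (X : {set {set 'I_n}}) (k : nat)
          (w : 'I_n -> C).

Definition osimp := ({set 'I_n} * bool)%type.

Definition upadj (s t : osimp) : bool :=
  [&& s.1 != t.1, s.1 :|: t.1 \in skel X k.+1 &
   [exists u, exists u',
     [&& u \notin s.1, u' \notin t.1, u |: s.1 == s.1 :|: t.1,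
         u' |: t.1 == s.1 :|: t.1 & ori_coface s.1 s.2 u == ori_coface t.1 t.2 u']]].

Definition wv (s t : {set 'I_n}) : C :=
  if [pick v in s :\: t] is Some v then w v else 0.

Definition upset (s : {set 'I_n}) : {set 'I_n} := [set u | u |: s \in skel X k.+1].

(* Delta^up_k, indexed by X^+_k (positively oriented sigma identified with sigma) *)
Definition Dup (s t : {set 'I_n}) : C :=
  if s == t then \sum_(u in upset s) w u ^+ 2
  else if upadj (s, false) (t, false) then wv s t * wv t s
  else if upadj (s, false) (t, true) then - (wv s t * wv t s)
  else 0.

(* Delta^up_k acting on the (n+2)-qubit space: on span{|x_sigma>|00>}, 0 elsewhere *)
Definition Dup_op : op C (sysT n) := fun x y =>
  if [&& ~~ x.1.2, ~~ x.2, ~~ y.1.2, ~~ y.2,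
         set_of x.1.1 \in skel X k & set_of y.1.1 \in skel X k]
  then Dup (set_of x.1.1) (set_of y.1.1) else 0.

Definition Pi_k : op C (sysT n) := fun x y =>
  [&& x == y, ~~ x.1.2, ~~ x.2 & set_of x.1.1 \in skel X k]%:R.
Definition Pi_pm : op C (sysT n) := fun x y =>
  [&& x == y, ~~ x.2 & set_of x.1.1 \in skel X k]%:R.

(* K^up : max over sigma in X^pm_k of
   sum_{i in [n-k-1], j in [k+2]} w(i(sigma)) w(j~(sigma^up(i))),
   i.e. i(sigma) runs over the vertices not in sigma and j~(...) over the
   vertices of sigma ∪ {i(sigma)}. *)
Definition Kup : C :=
  \big[Num.max/0]_(p : osimp | p.1 \in skel X k)
     \sum_(u in ~: p.1) \sum_(v in u |: p.1) w u * w v.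

Definition eta_up (p : osimp) : C :=
  1 - Kup^-1 * \sum_(s' in skel X k) `|Dup s' p.1|.

(* P^up on S_k = X^pm_k ∪ {Theta}; None stands for Theta *)
Definition Pup (p q : option osimp) : C :=
  match p, q with
  | Some s, Some t =>
      if s == t then (\sum_(u in upset s.1) w u ^+ 2) / Kup
      else if upadj s t then wv s.1 t.1 * wv t.1 s.1 / Kup else 0
  | Some s, None => eta_up s
  | None, None => 1
  | None, Some _ => 0
  end.

(* basis state of the (n+2)-qubit register -> element of S_k (if any):
   |x_sigma>|00> = sigma^+, |x_sigma>|10> = sigma^-, |0^n>|01> = Theta *)
Definition decode (x : sysT n) : option (option osimp) :=
  if x.2 then (if (x.1.1 == zeros n) && ~~ x.1.2 then Some None else None)
  else if set_of x.1.1 \in skel X k then Some (Some (set_of x.1.1, x.1.2))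
  else None.

Definition Pup_op : op C (sysT n) := fun x y =>
  match decode x, decode y with
  | Some p, Some q => Pup p q
  | _, _ => 0
  end.
End Complex.

Definition unitary_encoding0 (C : numClosedFieldType) (n al : nat)
  (Pi : op C (sysT n)) (U : op C (fullT n al)) (A : op C (sysT n)) : Prop :=
  unitaryo U /\ block Pi U = A.

Definition HZ_full (C : numClosedFieldType) (n al : nat) : op C (fullT n al) :=
  tenso (tenso (tenso (@ido C (bits n)) (@HZgate C)) (@ido C bool)) (@ido C (bits al)).

From Pilot Require Import Defs.
From HB Require Import structures.
From mathcomp Require Import all_boot all_order all_algebra.
From Stdlib Require Import FunctionalExtensionality.
Set Implicit Arguments. Unset Strict Implicit. Unset Printing Implicit Defensive.
Import Order.TTheory GRing.Theory Num.Theory.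
Local Open Scope ring_scope.

(* HZ only touches qubit n+1, and its row |0> is (1, -1)/sqrt 2, so the
   entry of the projected V^up at (sigma^+, tau^+) is
   (P^up(sigma^+, tau^+) - P^up(sigma^-, tau^+)) / sqrt 2.  Since
   sigma^- ~up tau^+ iff sigma^+ ~up tau^-, and at most one of
   sigma^+ ~up tau^+, sigma^+ ~up tau^- holds, this difference is the
   signed entry of Delta^up_k divided by K^up. *)

Section Operators.
Variable C : numClosedFieldType.

Lemma mulo_diagl (T : finType) (D A : op C T) i j :
  (forall a b, a != b -> D a b = 0) -> mulo D A i j = D i i * A i j.
Proof.
move=> Dd; rewrite /mulo (bigD1 i) //= big1 ?addr0 // => l /negbTE ne_li.
by rewrite Dd ?mul0r // eq_sym ne_li.
Qed.

Lemma mulo_diagr (T : finType) (D A : op C T) i j :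
  (forall a b, a != b -> D a b = 0) -> mulo A D i j = A i j * D j j.
Proof.
move=> Dd; rewrite /mulo (bigD1 j) //= big1 ?addr0 // => l /negbTE ne_lj.
by rewrite Dd ?mulr0 // ne_lj.
Qed.

Lemma block_diag n al (Pi : op C (sysT n)) (V : op C (fullT n al)) x y :
  (forall a b, a != b -> Pi a b = 0) ->
  block Pi V x y = Pi x x * proj0 V x y * Pi y y.
Proof. by move=> Pid; rewrite /block mulo_diagl // mulo_diagr // mulrA. Qed.

Lemma block_encoding_entry n al (Pi A : op C (sysT n)) (U : op C (fullT n al)) x y :
  (forall a b, a != b -> Pi a b = 0) ->
  block Pi U = mulo Pi (mulo A Pi) ->
  Pi x x = 1 -> Pi y y = 1 -> proj0 U x y = A x y.
Proof.
move=> Pid /(congr1 (fun B => B x y)) + Pix Piy.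
by rewrite block_diag // mulo_diagl // mulo_diagr // Pix Piy !mulr1 !mul1r.
Qed.

Lemma HZgate00 : HZgate C false false = (sqrtC 2)^-1.
Proof. by rewrite /HZgate /mulo big_bool /= /Zgate /Hgate /= mulr0 add0r mulr1 mul1r. Qed.

Lemma HZgate01 : HZgate C false true = - (sqrtC 2)^-1.
Proof. by rewrite /HZgate /mulo big_bool /= /Zgate /Hgate /= mulr0 addr0 mulrN1 mul1r. Qed.

Lemma mulo_HZ_fullE n al (V : op C (fullT n al)) x1 b x3 a t :
  mulo (@HZ_full C n al) V (x1, b, x3, a) t =
  \sum_(c : bool) HZgate C b c * V (x1, c, x3, a) t.
Proof.
rewrite /mulo big_bool /= addrC (bigD1 (x1, false, x3, a)) //=.
rewrite (bigD1 (x1, true, x3, a)) /=; last by apply/eqP; case.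
rewrite big1 ?addr0 => [|[[[l1 c] l3] l4] ne_l].
  by rewrite /HZ_full /tenso /ido /= !eqxx !mul1r !mulr1.
rewrite /HZ_full /tenso /ido /=.
have [e1|] := eqVneq x1 l1; last by rewrite !mul0r.
have [e3|] := eqVneq x3 l3; last by rewrite !(mulr0, mul0r).
have [e4|] := eqVneq a l4; last by rewrite !(mulr0, mul0r).
by subst; case: c ne_l; rewrite eqxx ?andbF.
Qed.

End Operators.

Section UpAdjacency.
Variables (n : nat) (X : {set {set 'I_n}}) (k : nat).

Lemma upadj_negl (s t : {set 'I_n}) (b c : bool) :
  upadj X k (s, ~~ b) (t, c) = upadj X k (s, b) (t, ~~ c).
Proof.
rewrite /upadj /=; congr [&& _, _ & _].
apply: eq_existsb => u; apply: eq_existsb => u'; rewrite /ori_coface.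
by case: b; case: c; case: inv_par; case: inv_par.
Qed.

(* The extra vertex is forced, so the two induced orientations are compared
   on the same coface. *)
Lemma upadj_negr_false (s t : {set 'I_n}) (b c : bool) :
  upadj X k (s, b) (t, c) -> upadj X k (s, b) (t, ~~ c) = false.
Proof.
case/and3P => _ _ /existsP[u /existsP[u' /and5P[su tu' eu eu' ori]]].
apply/negP; case/and3P => _ _ /existsP[v /existsP[v' /and5P[sv tv' ev ev' ori']]].
have uv : u = v.
  have: u \in v |: s by rewrite (eqP ev) -(eqP eu) setU11.
  by rewrite in_setU1 (negbTE su) orbF => /eqP.
have uv' : u' = v'.
  have: u' \in v' |: t by rewrite (eqP ev') -(eqP eu') setU11.
  by rewrite in_setU1 (negbTE tu') orbF => /eqP.
subst v v'; move: ori ori'; rewrite /ori_coface /= => /eqP ->.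
by rewrite addNb; case: (c (+) _).
Qed.

End UpAdjacency.

Section UpLaplacian.
Variables (C : numClosedFieldType) (n : nat) (X : {set {set 'I_n}}) (k : nat)
          (w : 'I_n -> C).

Local Notation Pup := (Pup X k w).
Local Notation Dup := (Dup X k w).
Local Notation Kup := (Kup X k w).

Lemma Pup_sub_opposite (s t : {set 'I_n}) :
  Pup (Some (s, false)) (Some (t, false)) - Pup (Some (s, true)) (Some (t, false)) =
  Kup^-1 * Dup s t.
Proof.
rewrite /Pup /Dup !xpair_eqE /= andbF.
have [<-|ne_st] := eqVneq s t.
  by rewrite /upadj (eqxx s) /= subr0 mulrC.
rewrite /= -[(s, true)]/(s, ~~ false) upadj_negl /=.
case adj: (upadj X k (s, false) (t, false)).
  by rewrite (upadj_negr_false adj) subr0 mulrC.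
by case: (upadj X k (s, false) (t, true));
  rewrite ?(sub0r, subr0, mulrN, mulr0, oppr0) // mulrC.
Qed.

Lemma Pi_k_offdiag x y : x != y -> Pi_k C X k x y = 0.
Proof. by move=> /negbTE ne_xy; rewrite /Pi_k ne_xy. Qed.

Lemma Pi_pm_offdiag x y : x != y -> Pi_pm C X k x y = 0.
Proof. by move=> /negbTE ne_xy; rewrite /Pi_pm ne_xy. Qed.

Lemma Pi_k_support x : Pi_k C X k x x != 0 ->
  [/\ Pi_k C X k x x = 1, x = (x.1.1, false, false) & Defs.set_of x.1.1 \in skel X k].
Proof.
case: x => [[x1 [] []]]; rewrite /Pi_k /= !eqxx //=.
by case: (Defs.set_of x1 \in skel X k); rewrite ?eqxx.
Qed.

Lemma Dup_opE x y :
  Dup_op X k w x y =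
  Pi_k C X k x x * Dup (Defs.set_of x.1.1) (Defs.set_of y.1.1) * Pi_k C X k y y.
Proof.
rewrite /Dup_op /Pi_k !eqxx.
case: x y => [[x1 [] []]] [[y1 [] []]] /=; rewrite ?(mul0r, mulr0, andbF) //.
case: (Defs.set_of x1 \in skel X k); case: (Defs.set_of y1 \in skel X k);
  by rewrite ?(mul0r, mulr0, mul1r, mulr1).
Qed.

Variables (al : nat) (U : op C (fullT n al)).
Hypothesis U_encodes : block (Pi_pm C X k) U =
  mulo (Pi_pm C X k) (mulo (Pup_op X k w) (Pi_pm C X k)).

Lemma proj0_HZ_encoding x1 y1 :
  Defs.set_of x1 \in skel X k -> Defs.set_of y1 \in skel X k ->
  proj0 (mulo (@HZ_full C n al) U) (x1, false, false) (y1, false, false) =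
  (Kup * sqrtC 2)^-1 * Dup (Defs.set_of x1) (Defs.set_of y1).
Proof.
move=> x1X y1X.
have Pi_pmE b z1 :
    Defs.set_of z1 \in skel X k -> Pi_pm C X k (z1, b, false) (z1, b, false) = 1.
  by move=> z1X; rewrite /Pi_pm eqxx z1X.
rewrite /proj0 mulo_HZ_fullE big_bool /= HZgate00 HZgate01.
rewrite -!/(proj0 U _ _) !(block_encoding_entry Pi_pm_offdiag U_encodes) ?Pi_pmE //.
rewrite /Pup_op /decode /= x1X y1X invfM mulrAC -Pup_sub_opposite.
by rewrite mulrBl mulNr addrC !(mulrC (sqrtC 2)^-1).
Qed.

End UpLaplacian.

Theorem proposition3p4 (C : numClosedFieldType) (n : nat)
  (X : {set {set 'I_n}}) (w : 'I_n -> C) (k al : nat)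
  (U : op C (fullT n al)) :
  simplicial_complex X ->
  (forall v, 0 < w v) ->
  unitary_encoding0 (Pi_pm C X k) U
    (mulo (Pi_pm C X k) (mulo (Pup_op X k w) (Pi_pm C X k))) ->
  block (Pi_k C X k) (mulo (@HZ_full C n al) U) =
  scaleo (Kup X k w * sqrtC 2)^-1 (Dup_op X k w).
Proof.
move=> _ _ [_ U_encodes].
apply: functional_extensionality => x; apply: functional_extensionality => y.
rewrite block_diag; last exact: Pi_k_offdiag.
rewrite /scaleo Dup_opE.
have [->|/Pi_k_support[-> ex xX]] := eqVneq (Pi_k C X k x x) 0.
  by rewrite !(mul0r, mulr0).
have [->|/Pi_k_support[-> ey yX]] := eqVneq (Pi_k C X k y y) 0.
  by rewrite !mulr0.
by rewrite ex ey (proj0_HZ_encoding U_encodes) // !mulr1 !mul1r.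
Qed.
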